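(* Let $k\ge2$ and $\sigma_i=\frac{i(k-i)}2$ for $i=0,\dots,k$. For $\boldsymbol\xi=(\xi_1,\dots,\xi_k)\in\mathbb{R}^k$ set $b_1=b_{k+1}=0$ and $b_i=\sigma_{i-1}\big(e^{-(\xi_i-\xi_{i-1})}-1\big)$ for $i=2,\dots,k$, and consider the system $\dot\xi_i=b_i-b_{i+1}$, $i=1,\dots,k$. Then: (a) the only critical point of this system on the hyperplane $\{\sum_{i=1}^k\xi_i=0\}$ is $\boldsymbol\xi=0$; (b) for any solution $\boldsymbol\xi(\tau)$ on its maximal interval $[0,\tau_\infty)$ with $\sum_{i=1}^k\xi_i(0)=0$, the functions $B(\tau)=\max\{b_i(\tau):1\le i\le k+1\}$ and $-b(\tau)$, where $b(\tau)=\min\{b_i(\tau):1\le i\le k+1\}$, are nonincreasing in $\tau$; moreover $B-b$ is strictly decreasing, unless $\xi_1\equiv\dots\equiv\xi_k\equiv0$. *)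

From Stdlib Require Import Reals Lra List.
From Coquelicot Require Import Coquelicot.
Open Scope R_scope.

(* Vectors xi = (xi_1,...,xi_k) are encoded as functions nat -> R,
   only the indices 1..k being relevant. *)

Definition sigma (k i : nat) : R := INR i * (INR k - INR i) / 2.

Definition bcoef (k : nat) (xi : nat -> R) (i : nat) : R :=
  if andb (Nat.leb 2 i) (Nat.leb i k)
  then sigma k (i - 1) * (exp (- (xi i - xi (i - 1)%nat)) - 1)
  else 0.

Definition rhs (k : nat) (xi : nat -> R) (i : nat) : R :=
  bcoef k xi i - bcoef k xi (S i).

Definition vsum (k : nat) (xi : nat -> R) : R :=
  fold_right Rplus 0 (map xi (seq 1 k)).

Definition Bmax (k : nat) (xi : nat -> R) : R :=
  fold_right Rmax (bcoef k xi 1) (map (bcoef k xi) (seq 1 (S k))).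
Definition bmin (k : nat) (xi : nat -> R) : R :=
  fold_right Rmin (bcoef k xi 1) (map (bcoef k xi) (seq 1 (S k))).

Definition is_right_derive (f : R -> R) (x l : R) : Prop :=
  filterlim (fun h => (f (x + h) - f x) / h) (at_right 0) (locally l).

Definition is_solution (k : nat) (xi : R -> nat -> R) (T : Rbar) : Prop :=
  forall i, (1 <= i <= k)%nat ->
    is_right_derive (fun t => xi t i) 0 (rhs k (xi 0) i) /\
    forall t, 0 < t -> Rbar_lt t T ->
      is_derive (fun s => xi s i) t (rhs k (xi t) i).

Definition is_maximal_solution (k : nat) (xi : R -> nat -> R) (T : Rbar) : Prop :=
  Rbar_lt 0 T /\ is_solution k xi T /\
  forall (T' : Rbar) (y : R -> nat -> R),
    Rbar_lt T T' -> is_solution k y T' ->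
    ~ (forall t, 0 <= t -> Rbar_lt t T -> forall i, (1 <= i <= k)%nat -> y t i = xi t i).

From Pilot Require Import Defs.
From Stdlib Require Import Reals Lra Lia List.
From Coquelicot Require Import Coquelicot.
Open Scope R_scope.

(* Along a solution, [b_j' = -(b_j + sigma_(j-1)) (2 b_j - b_(j-1) - b_(j+1))] with
   [b_1 = b_(k+1) = 0] and [b_j + sigma_(j-1) > 0] for [2 <= j <= k]: a discrete
   nonlinear heat equation.  At an index where [b_j] (resp. [-b_j]) is maximal the
   bracket has a sign, so [B] and [-b] are nonincreasing (maximum principle).  If
   [B - b] is not strictly decreasing on [[s, t]], then [B] and [b] are constant there.
   When [B > 0], the leftmost index attaining [B] has a smaller left neighbour, hence a
   negative derivative, so the set of maximal indices keeps shrinking: impossible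
   (strong maximum principle); likewise when [b < 0].  Otherwise all [b_j] vanish at
   [s]; a Gronwall bound on [exp (C v) max_j |b_j v|] shows that they vanish before [s]
   too, so [xi] is constant, equal to a critical point on the hyperplane, i.e. to [0].
   Part (a) is the elementary fact that [b_i - b_(i+1) = 0] for all [i] forces all
   [b_i = b_1 = 0], i.e. [xi] constant. *)

Section ListMax.
Context {I : Type}.

Definition lmax (f : I -> R) (i0 : I) (l : list I) : R :=
  fold_right Rmax (f i0) (map f l).

Lemma lmax_ge f i0 l j : In j (i0 :: l) -> f j <= lmax f i0 l.
Proof.
  unfold lmax; induction l as [|a l IH]; simpl.
  - intros [<- | []]; lra.
  - intros [<- | [<- | Hj]]; [| apply Rmax_l |];
      eapply Rle_trans; [| apply Rmax_r | | apply Rmax_r]; apply IH; simpl; auto.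
Qed.

Lemma lmax_le f i0 l (c : R) :
  (forall j, In j (i0 :: l) -> f j <= c) -> lmax f i0 l <= c.
Proof.
  unfold lmax; induction l as [|a l IH]; simpl; intros Hc; [auto |].
  apply Rmax_lub; [| apply IH; intros j Hj]; apply Hc; simpl in *; tauto.
Qed.

Lemma lmax_lt f i0 l (c : R) :
  (forall j, In j (i0 :: l) -> f j < c) -> lmax f i0 l < c.
Proof.
  unfold lmax; induction l as [|a l IH]; simpl; intros Hc; [auto |].
  apply Rmax_lub_lt; [| apply IH; intros j Hj]; apply Hc; simpl in *; tauto.
Qed.

Lemma lmax_attained f i0 l : exists j, In j (i0 :: l) /\ lmax f i0 l = f j.
Proof.
  unfold lmax; induction l as [|a l IH]; simpl.
  - exists i0; auto.
  - destruct IH as [j [Hj ->]]. destruct (Rle_dec (f a) (f j)).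
    + exists j. rewrite Rmax_right by auto. simpl in Hj; tauto.
    + exists a. rewrite Rmax_left by lra. auto.
Qed.

End ListMax.

Lemma filter_forall_In {T I : Type} {F : (T -> Prop) -> Prop} {FF : Filter F}
  (P : I -> T -> Prop) (l : list I) :
  (forall j, In j l -> F (P j)) -> F (fun x => forall j, In j l -> P j x).
Proof.
  induction l as [|a l IH]; intros H.
  - apply filter_forall; intros x j [].
  - apply (filter_imp (fun x => P a x /\ forall j, In j l -> P j x)).
    + intros x [Ha Hl] j [<- | Hj]; auto.
    + apply filter_and; [apply H; left | apply IH; intros j Hj; apply H; right]; auto.
Qed.

Lemma eventually_lmax_le {T I : Type} {F : (T -> Prop) -> Prop} {FF : Filter F}
  (f : I -> T -> R) i0 l (c : T -> R) :
  (forall j, In j (i0 :: l) -> F (fun x => f j x <= c x)) ->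
  F (fun x => lmax (fun j => f j x) i0 l <= c x).
Proof.
  intros H. apply (filter_imp _ _ (fun x Hx => lmax_le _ _ _ _ Hx)).
  exact (filter_forall_In (fun j x => f j x <= c x) _ H).
Qed.

Lemma eventually_lmax_lt {T I : Type} {F : (T -> Prop) -> Prop} {FF : Filter F}
  (f : I -> T -> R) i0 l (c : R) :
  (forall j, In j (i0 :: l) -> F (fun x => f j x < c)) ->
  F (fun x => lmax (fun j => f j x) i0 l < c).
Proof.
  intros H. apply (filter_imp _ _ (fun x Hx => lmax_lt _ _ _ _ Hx)).
  exact (filter_forall_In (fun j x => f j x < c) _ H).
Qed.

Lemma filterlim_eventually_lt {T : Type} {F : (T -> Prop) -> Prop}
  (f : T -> R) (y c : R) :
  filterlim f F (locally y) -> y < c -> F (fun x => f x < c).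
Proof. intros Hf Hy. exact (Hf _ (open_lt c y Hy)). Qed.

Lemma filterlim_eventually_gt {T : Type} {F : (T -> Prop) -> Prop}
  (f : T -> R) (y c : R) :
  filterlim f F (locally y) -> c < y -> F (fun x => c < f x).
Proof. intros Hf Hy. exact (Hf _ (open_gt c y Hy)). Qed.

Lemma at_right_gt (u : R) : at_right u (fun v => u < v).
Proof. unfold at_right, within. apply filter_forall; auto. Qed.

Lemma at_right_Rbar_lt (u : R) (T : Rbar) : Rbar_lt u T -> at_right u (fun v => Rbar_lt v T).
Proof. intros HuT. apply filter_le_within, (locally_interval _ u m_infty T); simpl; auto. Qed.

Lemma at_right_ex (P : R -> Prop) (u t : R) :
  u < t -> at_right u P -> exists v, u < v < t /\ P v.
Proof.
  intros Hut HP.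
  assert (Hnear := filter_and _ _ (at_right_gt u) (filter_and _ _ (at_right_Rbar_lt u t Hut) HP)).
  destruct (filter_ex _ Hnear) as [v Hv].
  exists v; tauto.
Qed.

Lemma at_left_interval (P : R -> Prop) (u : R) :
  at_left u P -> exists d, 0 < d /\ forall v, u - d < v < u -> P v.
Proof.
  intros [d Hd]. exists d; split; [apply cond_pos |].
  intros v Hv. apply Hd; [| lra].
  change (Rabs (v - u) < d). apply Rabs_def1; lra.
Qed.

Lemma right_continuous_eq (f : R -> R) (a c : R) :
  filterlim f (at_right a) (locally (f a)) -> at_right a (fun v => f v = c) -> f a = c.
Proof.
  intros Hf Hc.
  refine (filterlim_locally_unique (V := R_NormedModule) f (f a) c Hf _).
  apply (filterlim_ext_loc (fun _ => c)); [| apply filterlim_const].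
  apply (filter_imp _ _ (fun v Hv => eq_sym Hv) Hc).
Qed.

Lemma Rbar_lt_of_le (u t : R) (T : Rbar) : u <= t -> Rbar_lt t T -> Rbar_lt u T.
Proof. intros Hut HtT. apply (Rbar_le_lt_trans _ t); [simpl; lra | exact HtT]. Qed.

Lemma is_derive_continuous (f : R -> R) (u l : R) :
  is_derive f u l -> continuous f u.
Proof. intros Hd. apply (ex_derive_continuous (V := R_NormedModule)). exists l; exact Hd. Qed.

Lemma is_derive_eventually_lt (f : R -> R) (u l e : R) :
  is_derive f u l -> l < e -> at_right u (fun v => f v < f u + e * (v - u)).
Proof.
  intros Hd Hle. apply is_derive_Reals in Hd.
  destruct (Hd (e - l) ltac:(lra)) as [[d Hd0] Hq]; simpl in Hq.
  apply (locally_interval _ u (u - d) (u + d)); simpl; try lra.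
  intros v Hv1 Hv2 Huv.
  specialize (Hq (v - u) ltac:(lra) ltac:(rewrite Rabs_pos_eq; lra)).
  replace (u + (v - u)) with v in Hq by ring.
  apply Rabs_def2 in Hq as [Hq _].
  assert (Hslope : (f v - f u) / (v - u) < e) by lra.
  apply (Rmult_lt_compat_r (v - u)) in Hslope; [| lra].
  unfold Rdiv in Hslope. rewrite Rmult_assoc, Rinv_l, Rmult_1_r in Hslope; lra.
Qed.

Lemma right_derive_right_continuous (f : R -> R) (x l : R) :
  is_right_derive f x l -> filterlim f (at_right x) (locally (f x)).
Proof.
  intros Hq.
  assert (Hh : filterlim (fun h => h) (at_right 0) (locally 0)).
  { apply (filterlim_filter_le_1 _ (filter_le_within _)), filterlim_id. }
  assert (Hlim : filterlim (fun h => f x + h * ((f (x + h) - f x) / h)) (at_right 0)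
                   (locally (f x + 0 * l))).
  { apply (filterlim_comp_2 (G := locally (f x)) (H := locally (0 * l))
      (fun _ => f x) (fun h => h * ((f (x + h) - f x) / h)) Rplus).
    - apply filterlim_const.
    - apply (filterlim_comp_2 (fun h => h) _ Rmult Hh Hq), (filterlim_mult (K := R_AbsRing)).
    - apply (filterlim_plus (V := R_NormedModule)). }
  rewrite Rmult_0_l, Rplus_0_r in Hlim.
  intros P HP. destruct (Hlim P HP) as [d Hd]. exists d. intros v Hv Hxv. change R in v.
  specialize (Hd (v - x)).
  replace (f x + (v - x) * ((f (x + (v - x)) - f x) / (v - x))) with (f v) in Hd
    by (replace (x + (v - x)) with v by ring; field; lra).
  apply Hd; [| lra]. change (Rabs (v - x - 0) < d). rewrite Rminus_0_r. exact Hv.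
Qed.

Lemma is_derive_exp_gap (c : R) (x y : R -> R) (u dx dy : R) :
  is_derive x u dx -> is_derive y u dy ->
  is_derive (fun v => c * (exp (- (x v - y v)) - 1)) u
    (- (c * exp (- (x u - y u))) * (dx - dy)).
Proof.
  intros Hx Hy. auto_derive; [repeat split; eexists; eauto |].
  replace (Derive (fun v : R => x v) u) with dx by (symmetry; apply is_derive_unique, Hx).
  replace (Derive (fun v : R => y v) u) with dy by (symmetry; apply is_derive_unique, Hy).
  unfold Rminus; ring.
Qed.

Lemma is_derive_exp_mul (C : R) (f : R -> R) (u df : R) :
  is_derive f u df ->
  is_derive (fun v => exp (C * v) * f v) u (exp (C * u) * (C * f u + df)).
Proof.
  intros Hf. auto_derive; [eexists; eauto |].
  replace (Derive (fun v : R => f v) u) with df by (symmetry; apply is_derive_unique, Hf).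
  ring.
Qed.

(** * Maximum principles *)

Lemma le_of_right_slopes (g : R -> R) (a b : R) :
  a <= b ->
  (forall u, a < u <= b -> forall c, c < g u -> at_left u (fun v => c < g v)) ->
  (forall u, a <= u < b -> forall e, 0 < e ->
     at_right u (fun v => g v <= g u + e * (v - u))) ->
  g b <= g a.
Proof.
  intros Hab Hlsc Hslope.
  destruct (Rle_lt_dec (g b) (g a)) as [| Hgt]; [auto | exfalso].
  assert (Hab' : a < b) by (destruct Hab as [| ->]; lra).
  (* Tilt [g] by a slope [e] small enough that [h b > g a]; the supremum of the
     points where [h <= g a] then leads to a contradiction on both sides. *)
  set (e := (g b - g a) / (2 * (b - a))).
  assert (He : 0 < e) by (apply Rdiv_lt_0_compat; lra).
  set (h := fun u => g u - e * (u - a)).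
  set (E := fun u => a <= u <= b /\ h u <= g a).
  assert (HEa : E a) by (unfold E, h; split; lra).
  destruct (completeness E) as [u1 [Hub Hlub]].
  { exists b; intros u Hu; apply Hu. }
  { exists a; exact HEa. }
  assert (Hau1 : a <= u1) by (apply Hub, HEa).
  assert (Hu1b : u1 <= b) by (apply Hlub; intros u Hu; apply Hu).
  assert (Hhu1 : h u1 <= g a).
  { destruct (Rle_lt_dec (h u1) (g a)) as [| Hlt]; [auto | exfalso].
    destruct Hau1 as [Hau1 | <-]; [| unfold h in Hlt; lra].
    destruct (at_left_interval _ _ (Hlsc u1 (conj Hau1 Hu1b) (g a + e * (u1 - a))
      ltac:(unfold h in Hlt; lra))) as [d [Hd Hleft]].
    assert (u1 <= u1 - d); [| lra].
    apply Hlub. intros u [Hu Hhu].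
    destruct (Rle_lt_dec u (u1 - d)) as [| Hdu]; [auto | exfalso].
    destruct (Rle_lt_or_eq_dec u u1 (Hub u (conj Hu Hhu))) as [Hu1 | ->]; [| lra].
    specialize (Hleft u (conj Hdu Hu1)). unfold h in Hhu. nra. }
  assert (Hu1b' : u1 < b).
  { destruct Hu1b as [| ->]; [auto |]. unfold h, e in Hhu1.
    replace ((g b - g a) / (2 * (b - a)) * (b - a)) with ((g b - g a) / 2) in Hhu1
      by (field; lra). lra. }
  destruct (at_right_ex _ u1 b Hu1b' (Hslope u1 (conj Hau1 Hu1b') e He)) as [v [Hv Hgv]].
  assert (v <= u1); [| lra].
  apply Hub. split; [lra |]. unfold h in *. lra.
Qed.

Section MaximumPrinciple.
Context {I : Type} (F D : I -> R -> R) (i0 : I) (l : list I).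

Let M u := lmax (fun j => F j u) i0 l.

Lemma lmax_right_slope u :
  (forall j, In j (i0 :: l) -> is_derive (F j) u (D j u)) ->
  (forall j, In j (i0 :: l) -> F j u = M u -> D j u <= 0) ->
  forall e, 0 < e -> at_right u (fun v => M v <= M u + e * (v - u)).
Proof.
  intros Hd Hmax e He. apply eventually_lmax_le. intros j Hj.
  destruct (Rle_lt_or_eq_dec _ _ (lmax_ge (fun j => F j u) _ _ _ Hj)) as [Hlt | Heq].
  - assert (Hc := is_derive_continuous _ _ _ (Hd j Hj)).
    apply (filter_imp (fun v => u < v /\ F j v < M u)); [intros v Hv; nra |].
    apply filter_and; [apply at_right_gt |].
    apply filter_le_within, (filterlim_eventually_lt _ _ _ Hc Hlt).
  - apply (filter_imp (fun v => F j v < F j u + e * (v - u))).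
    + intros v Hv. fold (M u) in Heq. lra.
    + apply (is_derive_eventually_lt _ _ (D j u)); auto.
      specialize (Hmax j Hj Heq). lra.
Qed.

Lemma lmax_left_lsc u :
  (forall j, In j (i0 :: l) -> continuous (F j) u) ->
  forall c, c < M u -> at_left u (fun v => c < M v).
Proof.
  intros Hc c Hlt. destruct (lmax_attained (fun j => F j u) i0 l) as [j [Hj Hmax]].
  fold (M u) in Hmax. rewrite Hmax in Hlt.
  apply filter_le_within.
  apply (filter_imp (fun v => c < F j v)).
  - intros v Hv. eapply Rlt_le_trans; [exact Hv | apply (lmax_ge (fun j => F j v)), Hj].
  - exact (filterlim_eventually_gt _ _ _ (Hc j Hj) Hlt).
Qed.

Lemma lmax_nonincreasing a b :
  a <= b ->
  (forall j u, In j (i0 :: l) -> a <= u <= b -> is_derive (F j) u (D j u)) ->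
  (forall j u, In j (i0 :: l) -> a <= u <= b -> F j u = M u -> D j u <= 0) ->
  M b <= M a.
Proof.
  intros Hab Hd Hmax. apply le_of_right_slopes; [exact Hab | |].
  - intros u Hu. apply lmax_left_lsc. intros j Hj.
    apply (is_derive_continuous _ _ _ (Hd j u Hj ltac:(lra))).
  - intros u Hu. apply lmax_right_slope; intros j Hj; [apply Hd | apply Hmax]; auto; lra.
Qed.

Lemma lmax_nonincreasing_right_continuous a t :
  a <= t ->
  (forall j, In j (i0 :: l) -> filterlim (F j) (at_right a) (locally (F j a))) ->
  (forall j u, In j (i0 :: l) -> a < u <= t -> is_derive (F j) u (D j u)) ->
  (forall j u, In j (i0 :: l) -> a < u <= t -> F j u = M u -> D j u <= 0) ->
  M t <= M a.
Proof.
  intros Hat Hcont Hd Hmax.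
  destruct (Rle_lt_dec (M t) (M a)) as [| Hlt]; [auto | exfalso].
  destruct Hat as [Hat | ->]; [| lra].
  assert (Hnear : at_right a (fun v => M v < M t)).
  { apply eventually_lmax_lt. intros j Hj.
    apply (filterlim_eventually_lt _ _ _ (Hcont j Hj)).
    eapply Rle_lt_trans; [apply (lmax_ge (fun j => F j a)), Hj | exact Hlt]. }
  destruct (at_right_ex _ a t Hat Hnear) as [v [Hv Hmv]].
  assert (M t <= M v); [| lra].
  apply lmax_nonincreasing; [lra | |]; intros j u Hj Hu;
    [apply Hd | apply Hmax]; auto; lra.
Qed.

End MaximumPrinciple.

Lemma lmax_nondecreasing {I : Type} (F D : I -> R -> R) i0 l a b :
  a <= b ->
  (forall j u, In j (i0 :: l) -> a <= u <= b -> is_derive (F j) u (D j u)) ->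
  (forall j u, In j (i0 :: l) -> a <= u <= b ->
     F j u = lmax (fun i => F i u) i0 l -> 0 <= D j u) ->
  lmax (fun i => F i a) i0 l <= lmax (fun i => F i b) i0 l.
Proof.
  intros Hab Hd Hmax.
  assert (Hrev := lmax_nonincreasing (fun j w => F j (- w)) (fun j w => - D j (- w))
    i0 l (- b) (- a) ltac:(lra)).
  cbv beta in Hrev. rewrite !Ropp_involutive in Hrev. apply Hrev.
  - intros j w Hj Hw.
    replace (- D j (- w)) with (scal (-1) (D j (- w)))
      by (unfold scal; simpl; unfold mult; simpl; ring).
    apply (is_derive_comp (F j) Ropp); [apply Hd; auto; lra |].
    auto_derive; auto.
  - intros j w Hj Hw Hjmax. assert (0 <= D j (- w)); [| lra]. apply Hmax; auto; lra.
Qed.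

Lemma leftmost_maximizer (f : nat -> R) (c : R) (m : nat) :
  (1 <= m)%nat -> f 1%nat < c -> f m = c ->
  (forall j, (1 <= j <= m)%nat -> f j <= c) ->
  exists j, (2 <= j <= m)%nat /\ f j = c /\ f (j - 1)%nat < c.
Proof.
  induction m as [| m IH]; intros Hm H1 Hfm Hle; [lia |].
  destruct (Nat.eq_dec m 0) as [-> | Hm0]; [lra |].
  destruct (Rle_lt_or_eq_dec _ _ (Hle m ltac:(lia))) as [Hlt | Heq].
  - exists (S m). replace (S m - 1)%nat with m by lia. repeat split; auto; lia.
  - destruct (IH ltac:(lia) H1 Heq) as [j Hj]; [intros; apply Hle; lia |].
    exists j. repeat split; try tauto; lia.
Qed.

Lemma in_cons_seq1 (K j : nat) :
  (1 <= K)%nat -> In j (1%nat :: seq 1 K) <-> (1 <= j <= K)%nat.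
Proof. intros HK. simpl. rewrite in_seq. lia. Qed.

Section StrongMaximumPrinciple.
Variables (F D : nat -> R -> R) (K : nat) (s t c : R).
Hypothesis HK : (1 <= K)%nat.
Hypothesis Hderive :
  forall j u, (1 <= j <= K)%nat -> s < u < t -> is_derive (F j) u (D j u).
Hypothesis Hfirst : forall u, s < u < t -> F 1%nat u < c.
Hypothesis Hmax : forall u, s < u < t -> lmax (fun j => F j u) 1%nat (seq 1 K) = c.
Hypothesis Hdrop : forall j u, (2 <= j <= K)%nat -> s < u < t ->
  F j u = c -> F (j - 1)%nat u < c -> D j u < 0.

Definition maximizers_within (u : R) (S : list nat) : Prop :=
  forall j, (1 <= j <= K)%nat -> F j u = c -> In j S.

Lemma le_constant_max u j : s < u < t -> (1 <= j <= K)%nat -> F j u <= c.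
Proof.
  intros Hu Hj. rewrite <- (Hmax u Hu).
  apply (lmax_ge (fun j => F j u)), in_cons_seq1; auto.
Qed.

Lemma exists_maximizer u : s < u < t -> exists j, (1 <= j <= K)%nat /\ F j u = c.
Proof.
  intros Hu. destruct (lmax_attained (fun j => F j u) 1%nat (seq 1 K)) as [j [Hj Hjmax]].
  exists j. rewrite Hmax in Hjmax by auto. apply in_cons_seq1 in Hj; auto.
Qed.

(* Right after [u] the leftmost maximizer drops below [c] and no other index
   reaches [c]. *)
Lemma maximizers_shrink u S :
  s < u < t -> maximizers_within u S ->
  exists v S', u < v < t /\ (length S' < length S)%nat /\ maximizers_within v S'.
Proof.
  intros Hu HS.
  destruct (exists_maximizer u Hu) as [j1 [Hj1 Hj1c]].
  destruct (leftmost_maximizer (fun j => F j u) c j1) as [j [Hj [Hjc Hj1c']]];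
    try lia; auto; [intros; apply le_constant_max; auto; lia |].
  assert (HjS : In j S) by (apply HS; auto; lia).
  set (S' := remove Nat.eq_dec j S).
  assert (Hnear : at_right u (fun v => forall i, In i (seq 1 K) -> F i v = c -> In i S')).
  { apply filter_forall_In. intros i Hi. apply in_seq in Hi.
    destruct (Nat.eq_dec i j) as [-> | Hij].
    - apply (filter_imp (fun v => F j v < F j u + 0 * (v - u))); [intros v Hv Hv'; lra |].
      apply (is_derive_eventually_lt _ _ (D j u)); [apply Hderive; auto; lia |].
      apply Hdrop; auto; lia.
    - destruct (Rle_lt_or_eq_dec _ _ (le_constant_max u i Hu ltac:(lia))) as [Hlt | Heq].
      + apply filter_le_within, (filter_imp (fun v => F i v < c)); [intros v Hv Hv'; lra |].
        apply (filterlim_eventually_lt _ _ _ (is_derive_continuous _ _ _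
          (Hderive i u ltac:(lia) Hu)) Hlt).
      + apply filter_forall. intros v _. apply in_in_remove, HS; auto; lia. }
  destruct (at_right_ex _ u t ltac:(lra) Hnear) as [v [Hv Hv']].
  exists v, S'. split; [lra | split; [apply remove_length_lt, HjS |]].
  intros i Hi Hic. apply Hv'; auto. apply in_seq; lia.
Qed.

Lemma lmax_not_constant : s < t -> False.
Proof.
  intros Hst.
  assert (Hnever : forall n S u, (length S <= n)%nat -> s < u < t -> ~ maximizers_within u S).
  { induction n as [| n IH]; intros S u Hlen Hu HS.
    - destruct (exists_maximizer u Hu) as [j [Hj Hjc]].
      destruct S; [apply (HS j Hj Hjc) | simpl in Hlen; lia].
    - destruct (maximizers_shrink u S Hu HS) as [v [S' [Hv [HS' Hv']]]].
      apply (IH S' v); [lia | lra | exact Hv']. }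
  apply (Hnever K (seq 1 K) ((s + t) / 2)); [rewrite length_seq; lia | lra |].
  intros j Hj _. apply in_seq; lia.
Qed.

End StrongMaximumPrinciple.

(** * The coefficients [b_j] *)

(* [Defs.sigma] is qualified because Stdlib's [sigma] (partial sums) shadows it. *)
Lemma sigma_pos (k i : nat) : (1 <= i < k)%nat -> 0 < Defs.sigma k i.
Proof.
  intros Hi. unfold Defs.sigma.
  assert (1 <= INR i) by (apply (le_INR 1); lia).
  assert (INR i + 1 <= INR k) by (rewrite <- S_INR; apply le_INR; lia).
  apply Rdiv_lt_0_compat; [apply Rmult_lt_0_compat |]; lra.
Qed.

Lemma sigma_le (k i : nat) : (i <= k)%nat -> Defs.sigma k i <= INR k * INR k.
Proof.
  intros Hi. unfold Defs.sigma.
  assert (0 <= INR i) by apply pos_INR.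
  assert (INR i <= INR k) by (apply le_INR; lia).
  nra.
Qed.

Lemma bcoef_inner (k : nat) (x : nat -> R) (j : nat) : (2 <= j <= k)%nat ->
  bcoef k x j = Defs.sigma k (j - 1) * (exp (- (x j - x (j - 1)%nat)) - 1).
Proof.
  intros Hj. unfold bcoef.
  replace (Nat.leb 2 j && Nat.leb j k)%bool with true; [reflexivity |].
  symmetry. apply andb_true_intro; split; apply Nat.leb_le; lia.
Qed.

Lemma bcoef_outer (k : nat) (x : nat -> R) (j : nat) : ~ (2 <= j <= k)%nat -> bcoef k x j = 0.
Proof.
  intros Hj. unfold bcoef.
  destruct (Nat.leb 2 j) eqn:H2; destruct (Nat.leb j k) eqn:Hk; simpl; auto.
  apply Nat.leb_le in H2, Hk. lia.
Qed.

Lemma bcoef_add_sigma_pos (k : nat) (x : nat -> R) (j : nat) : (2 <= j <= k)%nat ->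
  0 < bcoef k x j + Defs.sigma k (j - 1).
Proof.
  intros Hj. rewrite bcoef_inner by auto.
  assert (Hs := sigma_pos k (j - 1) ltac:(lia)).
  assert (He := exp_pos (- (x j - x (j - 1)%nat))). nra.
Qed.

Lemma bcoef_add_sigma_boundary (k : nat) (x : nat -> R) (j : nat) :
  j = 1%nat \/ j = S k -> bcoef k x j + Defs.sigma k (j - 1) = 0.
Proof.
  intros Hj. rewrite bcoef_outer by lia. unfold Defs.sigma.
  destruct Hj as [-> | ->]; simpl; [| rewrite Nat.sub_0_r]; field.
Qed.

(* Along a solution [b_j' = bdot k xi j], because
   [b_j + sigma_(j-1) = sigma_(j-1) exp (-(xi_j - xi_(j-1)))] and
   [xi_j' - xi_(j-1)' = 2 b_j - b_(j-1) - b_(j+1)].  It vanishes at [j = 1] and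
   [j = k + 1], where [b_j + sigma_(j-1) = 0]. *)
Definition bdot (k : nat) (x : nat -> R) (j : nat) : R :=
  - (bcoef k x j + Defs.sigma k (j - 1)) *
    (2 * bcoef k x j - bcoef k x (j - 1) - bcoef k x (S j)).

Lemma scaled_bdot_at_max (k : nat) (x : nat -> R) (r : R) (j : nat) :
  (1 <= j <= S k)%nat ->
  (forall i, (1 <= i <= S k)%nat -> r * bcoef k x i <= r * bcoef k x j) ->
  r * bdot k x j <= 0.
Proof.
  intros Hj Hmax. unfold bdot.
  assert (Hcase : (2 <= j <= k)%nat \/ (j = 1%nat \/ j = S k)) by lia.
  destruct Hcase as [Hin | Hbd]; [| rewrite bcoef_add_sigma_boundary by auto; lra].
  assert (Hp := bcoef_add_sigma_pos k x j Hin).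
  assert (H1 := Hmax (j - 1)%nat ltac:(lia)). assert (H2 := Hmax (S j) ltac:(lia)).
  nra.
Qed.

Lemma scaled_bdot_at_leftmost_max (k : nat) (x : nat -> R) (r : R) (j : nat) :
  (2 <= j <= k)%nat ->
  (forall i, (1 <= i <= S k)%nat -> r * bcoef k x i <= r * bcoef k x j) ->
  r * bcoef k x (j - 1) < r * bcoef k x j ->
  r * bdot k x j < 0.
Proof.
  intros Hj Hmax Hleft. unfold bdot.
  assert (Hp := bcoef_add_sigma_pos k x j Hj).
  assert (H2 := Hmax (S j) ltac:(lia)).
  nra.
Qed.

Lemma scaled_bdot_lower_bound (k : nat) (x : nat -> R) (r M : R) (j : nat) :
  (1 <= j <= S k)%nat ->
  (forall i, (1 <= i <= S k)%nat ->
     r * bcoef k x i <= r * bcoef k x j /\ - (r * bcoef k x i) <= r * bcoef k x j) ->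
  bcoef k x j <= M ->
  - 4 * (M + INR k * INR k) * (r * bcoef k x j) <= r * bdot k x j.
Proof.
  intros Hj Hmax HM. unfold bdot.
  assert (Hm : 0 <= r * bcoef k x j) by (destruct (Hmax j Hj); lra).
  assert (Hcase : (2 <= j <= k)%nat \/ (j = 1%nat \/ j = S k)) by lia.
  destruct Hcase as [Hin | Hbd].
  - assert (Hp := bcoef_add_sigma_pos k x j Hin).
    assert (Hs := sigma_le k (j - 1) ltac:(lia)).
    destruct (Hmax (j - 1)%nat ltac:(lia)). destruct (Hmax (S j) ltac:(lia)).
    set (p := bcoef k x j + Defs.sigma k (j - 1)) in *.
    set (q := 2 * (r * bcoef k x j) - r * bcoef k x (j - 1) - r * bcoef k x (S j)).
    assert (Hq : 0 <= q <= 4 * (r * bcoef k x j)) by (unfold q; lra).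
    assert (Hpq : p * q <= (M + INR k * INR k) * q) by (apply Rmult_le_compat_r; unfold p; lra).
    assert (Hq4 : (M + INR k * INR k) * q <= (M + INR k * INR k) * (4 * (r * bcoef k x j)))
      by (apply Rmult_le_compat_l; unfold p in Hp; lra).
    replace (r * (- p * (2 * bcoef k x j - bcoef k x (j - 1) - bcoef k x (S j))))
      with (- (p * q)) by (unfold q; ring).
    lra.
  - rewrite bcoef_add_sigma_boundary by auto.
    assert (0 <= INR k * INR k) by (apply Rle_0_sqr).
    rewrite bcoef_outer in HM by lia. nra.
Qed.

Lemma bcoef_zero_of_rhs_zero (k : nat) (x : nat -> R) :
  (forall i, (1 <= i <= k)%nat -> rhs k x i = 0) ->
  forall j, (1 <= j <= S k)%nat -> bcoef k x j = 0.
Proof.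
  intros Hrhs j. induction j as [| j IH]; intros Hj; [lia |].
  destruct (Nat.eq_dec j 0) as [-> | Hj0]; [apply bcoef_outer; lia |].
  specialize (Hrhs j ltac:(lia)). unfold rhs in Hrhs. rewrite IH in Hrhs by lia. lra.
Qed.

Lemma eq_pred_of_bcoef_zero (k : nat) (x : nat -> R) (j : nat) :
  (2 <= j <= k)%nat -> bcoef k x j = 0 -> x j = x (j - 1)%nat.
Proof.
  intros Hj Hb. rewrite bcoef_inner in Hb by auto.
  assert (Hs := sigma_pos k (j - 1) ltac:(lia)).
  apply Rmult_integral in Hb as [Hs0 | He]; [lra |].
  assert (Hexp : exp (- (x j - x (j - 1)%nat)) = exp 0) by (rewrite exp_0; lra).
  apply exp_inv in Hexp. lra.
Qed.

Lemma sum_seq_const (x : nat -> R) (c : R) (a n : nat) :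
  (forall i, (a <= i < a + n)%nat -> x i = c) ->
  fold_right Rplus 0 (map x (seq a n)) = INR n * c.
Proof.
  revert a. induction n as [| n IH]; intros a Hc; [simpl; ring |].
  cbn [seq map fold_right].
  rewrite (IH (S a)) by (intros i Hi; apply Hc; lia). rewrite Hc, S_INR by lia. ring.
Qed.

Lemma critical_point_zero (k : nat) (x : nat -> R) :
  (1 <= k)%nat -> vsum k x = 0 -> (forall j, (2 <= j <= k)%nat -> bcoef k x j = 0) ->
  forall i, (1 <= i <= k)%nat -> x i = 0.
Proof.
  intros Hk Hsum Hb.
  assert (Hconst : forall i, (1 <= i <= k)%nat -> x i = x 1%nat).
  { intros i. induction i as [| i IH]; intros Hi; [lia |].
    destruct (Nat.eq_dec i 0) as [-> | Hi0]; [reflexivity |].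
    rewrite <- IH by lia. replace i with (S i - 1)%nat at 2 by lia.
    apply (eq_pred_of_bcoef_zero k), Hb; lia. }
  unfold vsum in Hsum. rewrite (sum_seq_const x (x 1%nat)) in Hsum
    by (intros i Hi; apply Hconst; lia).
  assert (Hkpos : 0 < INR k) by (apply lt_0_INR; lia).
  assert (H1 : x 1%nat = 0) by nra.
  intros i Hi. rewrite Hconst; auto.
Qed.

Definition scaled_max (k : nat) (r : R) (x : nat -> R) : R :=
  lmax (fun j => r * bcoef k x j) 1%nat (seq 1 (S k)).

Lemma Bmax_scaled_max (k : nat) (x : nat -> R) : Bmax k x = scaled_max k 1 x.
Proof.
  unfold Bmax, scaled_max, lmax. rewrite Rmult_1_l. f_equal.
  apply map_ext. intros j. ring.
Qed.

Lemma bmin_scaled_max (k : nat) (x : nat -> R) : - bmin k x = scaled_max k (-1) x.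
Proof.
  unfold bmin, scaled_max, lmax. induction (seq 1 (S k)) as [| a l IH]; simpl; [ring |].
  rewrite Ropp_Rmin, IH. f_equal. ring.
Qed.

Lemma scaled_max_ge (k : nat) (r : R) (x : nat -> R) (j : nat) :
  (1 <= j <= S k)%nat -> r * bcoef k x j <= scaled_max k r x.
Proof. intros Hj. apply (lmax_ge (fun j => r * bcoef k x j)), in_cons_seq1; lia. Qed.

Lemma scaled_max_nonneg (k : nat) (r : R) (x : nat -> R) : 0 <= scaled_max k r x.
Proof.
  assert (H1 := scaled_max_ge k r x 1 ltac:(lia)).
  rewrite bcoef_outer in H1 by lia. lra.
Qed.

Lemma bcoef_zero_of_scaled_max_zero (k : nat) (x : nat -> R) :
  scaled_max k 1 x = 0 -> scaled_max k (-1) x = 0 ->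
  forall j, (1 <= j <= S k)%nat -> bcoef k x j = 0.
Proof.
  intros Hplus Hminus j Hj.
  assert (H1 := scaled_max_ge k 1 x j Hj). assert (H2 := scaled_max_ge k (-1) x j Hj).
  lra.
Qed.

Lemma scaled_max_of_bcoef_zero (k : nat) (r : R) (x : nat -> R) :
  (forall j, (1 <= j <= S k)%nat -> bcoef k x j = 0) -> scaled_max k r x = 0.
Proof.
  intros Hb. apply Rle_antisym; [| apply scaled_max_nonneg].
  apply lmax_le. intros j Hj. apply in_cons_seq1 in Hj; [| lia]. rewrite Hb by auto. lra.
Qed.

Definition signed_indices (k : nat) : list (R * nat) :=
  list_prod (1 :: -1 :: nil) (seq 1 (S k)).

Lemma in_signed_indices (k : nat) (r : R) (i : nat) :
  In (r, i) ((1, 1%nat) :: signed_indices k) <-> (r = 1 \/ r = -1) /\ (1 <= i <= S k)%nat.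
Proof.
  change (In (r, i) ((1, 1%nat) :: signed_indices k))
    with ((1, 1%nat) = (r, i) \/ In (r, i) (signed_indices k)).
  unfold signed_indices. rewrite in_prod_iff, in_seq. simpl. split.
  - intros [[= <- <-] | [[<- | [<- | []]] Hi]]; split; auto; lia.
  - intros [[-> | ->] Hi]; right; split; auto; lia.
Qed.

(** * Solutions *)

Section Solution.
Variables (k : nat) (xi : R -> nat -> R) (T : Rbar).
Hypothesis Hsol : is_solution k xi T.

Lemma is_derive_bcoef (j : nat) (u : R) :
  (1 <= j <= S k)%nat -> 0 < u -> Rbar_lt u T ->
  is_derive (fun v => bcoef k (xi v) j) u (bdot k (xi u) j).
Proof.
  intros Hj Hu HuT.
  assert (Hcase : (2 <= j <= k)%nat \/ (j = 1%nat \/ j = S k)) by lia.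
  destruct Hcase as [Hin | Hbd].
  - assert (Hx := proj2 (Hsol j ltac:(lia)) u Hu HuT).
    assert (Hy := proj2 (Hsol (j - 1)%nat ltac:(lia)) u Hu HuT).
    apply (is_derive_ext
      (fun v => Defs.sigma k (j - 1) * (exp (- (xi v j - xi v (j - 1)%nat)) - 1))).
    { intros v. rewrite bcoef_inner by lia. reflexivity. }
    replace (bdot k (xi u) j) with
      (- (Defs.sigma k (j - 1) * exp (- (xi u j - xi u (j - 1)%nat))) *
       (rhs k (xi u) j - rhs k (xi u) (j - 1)))
      by (unfold bdot, rhs; replace (S (j - 1)) with j by lia;
          rewrite (bcoef_inner k (xi u) j) by lia; ring).
    exact (is_derive_exp_gap _ (fun v => xi v j) (fun v => xi v (j - 1)%nat) _ _ _ Hx Hy).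
  - apply (is_derive_ext (fun _ => 0)); [intros v; rewrite bcoef_outer by lia; reflexivity |].
    unfold bdot. rewrite bcoef_add_sigma_boundary by auto. rewrite Ropp_0, Rmult_0_l.
    apply (is_derive_const (K := R_AbsRing) (V := R_NormedModule)).
Qed.

Lemma solution_right_continuous (i : nat) (s : R) :
  (1 <= i <= k)%nat -> 0 <= s -> Rbar_lt s T ->
  filterlim (fun v => xi v i) (at_right s) (locally (xi s i)).
Proof.
  intros Hi [Hs | <-] HsT.
  - apply (filterlim_filter_le_1 _ (filter_le_within _)).
    exact (is_derive_continuous _ _ _ (proj2 (Hsol i Hi) s Hs HsT)).
  - exact (right_derive_right_continuous _ _ _ (proj1 (Hsol i Hi))).
Qed.

Lemma bcoef_right_continuous (j : nat) (s : R) :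
  0 <= s -> Rbar_lt s T ->
  filterlim (fun v => bcoef k (xi v) j) (at_right s) (locally (bcoef k (xi s) j)).
Proof.
  intros Hs HsT.
  destruct (Compare_dec.le_lt_dec 2 j); [destruct (Compare_dec.le_lt_dec j k) |].
  2, 3: rewrite bcoef_outer by lia; apply (filterlim_ext (fun _ => 0));
        [intros v; rewrite bcoef_outer by lia; reflexivity | apply filterlim_const].
  set (g z := Defs.sigma k (j - 1) * (exp (- z) - 1)).
  apply (filterlim_ext (fun v => g (xi v j + - xi v (j - 1)%nat))).
  { intros v. rewrite bcoef_inner by lia. reflexivity. }
  rewrite bcoef_inner by lia. fold (g (xi s j - xi s (j - 1)%nat)).
  assert (Hg : continuous g (xi s j - xi s (j - 1)%nat)).
  { apply (ex_derive_continuous (V := R_NormedModule)). unfold g. auto_derive. auto. }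
  refine (filterlim_comp _ _ _ (fun v => xi v j + - xi v (j - 1)%nat) g _ _ _ _ Hg).
  apply (filterlim_comp_2 (G := locally (xi s j)) (H := locally (- xi s (j - 1)%nat))
    (fun v => xi v j) (fun v => - xi v (j - 1)%nat) Rplus).
  - apply solution_right_continuous; auto; lia.
  - apply (filterlim_comp _ _ _ (fun v => xi v (j - 1)%nat) Ropp _
      (locally (xi s (j - 1)%nat))).
    + apply solution_right_continuous; auto; lia.
    + apply (filterlim_opp (V := R_NormedModule)).
  - apply (filterlim_plus (V := R_NormedModule)).
Qed.

Lemma scaled_max_nonincreasing (r s t : R) :
  0 <= s <= t -> Rbar_lt t T -> scaled_max k r (xi t) <= scaled_max k r (xi s).
Proof.
  intros Hst HtT.
  apply (lmax_nonincreasing_right_continuous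
           (fun j v => r * bcoef k (xi v) j) (fun j v => r * bdot k (xi v) j)); [lra | | |].
  - intros j _. apply (filterlim_comp _ _ _ (fun v => bcoef k (xi v) j) (fun z => r * z) _
      (locally (bcoef k (xi s) j))).
    + apply bcoef_right_continuous; [lra | apply (Rbar_lt_of_le _ t); auto; lra].
    + apply (filterlim_scal_r (V := R_NormedModule)).
  - intros j u Hj Hu. apply in_cons_seq1 in Hj; [| lia].
    apply is_derive_scal, is_derive_bcoef; auto; [lra | apply (Rbar_lt_of_le _ t); auto; lra].
  - intros j u Hj Hu Hmax. apply in_cons_seq1 in Hj; [| lia].
    apply scaled_bdot_at_max; auto. intros i Hi. rewrite Hmax.
    apply (scaled_max_ge k r (xi u) i Hi).
Qed.

Lemma scaled_max_decreasing (r s t : R) :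
  0 <= s < t -> Rbar_lt t T -> 0 < scaled_max k r (xi s) ->
  scaled_max k r (xi t) < scaled_max k r (xi s).
Proof.
  intros Hst HtT Hpos. set (c := scaled_max k r (xi s)) in *.
  destruct (Rlt_le_dec (scaled_max k r (xi t)) c) as [| Hge]; [auto | exfalso].
  assert (HuT : forall u, s < u < t -> Rbar_lt u T)
    by (intros u Hu; apply (Rbar_lt_of_le _ t); auto; lra).
  assert (Hconst : forall u, s < u < t -> scaled_max k r (xi u) = c).
  { intros u Hu. apply Rle_antisym.
    - apply scaled_max_nonincreasing; auto; lra.
    - apply (Rle_trans _ _ _ Hge), scaled_max_nonincreasing; auto; lra. }
  apply (lmax_not_constant (fun j v => r * bcoef k (xi v) j) (fun j v => r * bdot k (xi v) j)
           (S k) s t c); [lia | | | exact Hconst | | lra].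
  - intros j u Hj Hu. apply is_derive_scal, is_derive_bcoef; auto; lia || lra.
  - intros u Hu. rewrite bcoef_outer by lia. lra.
  - intros j u Hj Hu Hjc Hleft.
    destruct (Nat.eq_dec j (S k)) as [-> | Hjk]; [rewrite bcoef_outer in Hjc by lia; lra |].
    apply scaled_bdot_at_leftmost_max; [lia | | lra].
    intros i Hi. rewrite Hjc, <- (Hconst u Hu). apply scaled_max_ge, Hi.
Qed.

(* [lmax] over the pairs [(1, j)] and [(-1, j)] is [max_j |b_j|]; the weight
   [exp (C v)] absorbs the lower bound of [scaled_bdot_lower_bound] (Gronwall). *)
Lemma weighted_abs_max_nondecreasing (C u s : R) :
  0 < u <= s -> Rbar_lt s T -> 4 * (scaled_max k 1 (xi u) + INR k * INR k) <= C ->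
  lmax (fun p => exp (C * u) * (fst p * bcoef k (xi u) (snd p))) (1, 1%nat) (signed_indices k)
  <= lmax (fun p => exp (C * s) * (fst p * bcoef k (xi s) (snd p))) (1, 1%nat)
       (signed_indices k).
Proof.
  intros Hus HsT HC.
  assert (HvT : forall v, v <= s -> Rbar_lt v T)
    by (intros v Hv; apply (Rbar_lt_of_le _ s); auto).
  apply (lmax_nondecreasing (fun p v => exp (C * v) * (fst p * bcoef k (xi v) (snd p)))
    (fun p v => exp (C * v) *
       (C * (fst p * bcoef k (xi v) (snd p)) + fst p * bdot k (xi v) (snd p)))); [lra | |].
  - intros [r i] v Hp Hv. apply in_signed_indices in Hp as [Hr Hi]. simpl.
    apply (is_derive_exp_mul C (fun w => r * bcoef k (xi w) i)).
    apply is_derive_scal, is_derive_bcoef; [lia | lra | apply HvT; lra].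
  - intros [r i] v Hp Hv Hmax. apply in_signed_indices in Hp as [Hr Hi].
    cbn [fst snd] in Hmax |- *.
    assert (Hdom : forall r' i', (r' = 1 \/ r' = -1) -> (1 <= i' <= S k)%nat ->
              r' * bcoef k (xi v) i' <= r * bcoef k (xi v) i).
    { intros r' i' Hr' Hi'. apply (Rmult_le_reg_l (exp (C * v))); [apply exp_pos |].
      rewrite Hmax.
      apply (lmax_ge (fun p => exp (C * v) * (fst p * bcoef k (xi v) (snd p))) _ _ (r', i')),
        in_signed_indices; auto. }
    assert (Hm : 0 <= r * bcoef k (xi v) i)
      by (assert (H := Hdom (- r) i ltac:(lra) Hi); lra).
    assert (HM : bcoef k (xi v) i <= scaled_max k 1 (xi u)).
    { apply (Rle_trans _ (scaled_max k 1 (xi v))).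
      - rewrite <- (Rmult_1_l (bcoef k (xi v) i)) at 1. apply scaled_max_ge, Hi.
      - apply scaled_max_nonincreasing; [lra | apply HvT; lra]. }
    assert (Hlow := scaled_bdot_lower_bound k (xi v) r (scaled_max k 1 (xi u)) i Hi).
    specialize (Hlow ltac:(intros i' Hi'; split; [| rewrite Ropp_mult_distr_l];
                            apply Hdom; auto; lra) HM).
    assert (HCm : 4 * (scaled_max k 1 (xi u) + INR k * INR k) * (r * bcoef k (xi v) i)
                  <= C * (r * bcoef k (xi v) i)) by (apply Rmult_le_compat_r; auto).
    apply Rmult_le_pos; [apply Rlt_le, exp_pos | lra].
Qed.

Lemma bcoef_vanish_backward (u s : R) :
  0 < u <= s -> Rbar_lt s T ->
  (forall j, (1 <= j <= S k)%nat -> bcoef k (xi s) j = 0) ->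
  forall j, (1 <= j <= S k)%nat -> bcoef k (xi u) j = 0.
Proof.
  intros Hus HsT Hs0 j Hj.
  set (C := 4 * (scaled_max k 1 (xi u) + INR k * INR k)).
  assert (Hgrow := weighted_abs_max_nondecreasing C u s Hus HsT (Rle_refl _)).
  set (P p := exp (C * u) * (fst p * bcoef k (xi u) (snd p))) in Hgrow.
  assert (Hzero : lmax P (1, 1%nat) (signed_indices k) <= 0).
  { apply (Rle_trans _ _ _ Hgrow), lmax_le. intros [r i] Hp.
    apply in_signed_indices in Hp as [_ Hi]. simpl. rewrite Hs0 by auto. lra. }
  assert (Hle : forall r, r = 1 \/ r = -1 -> exp (C * u) * (r * bcoef k (xi u) j) <= 0).
  { intros r Hr. refine (Rle_trans _ _ _ _ Hzero).
    apply (lmax_ge P _ (signed_indices k) (r, j)), in_signed_indices; auto. }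
  assert (Hplus := Hle 1 (or_introl eq_refl)). assert (Hminus := Hle (-1) (or_intror eq_refl)).
  assert (Hzb : exp (C * u) * bcoef k (xi u) j = 0) by lra.
  apply Rmult_integral in Hzb as [He | ]; [| auto].
  assert (Hpos := exp_pos (C * u)). lra.
Qed.

Lemma solution_zero_of_bcoef_zero (s : R) :
  (1 <= k)%nat -> vsum k (xi 0) = 0 -> 0 <= s -> Rbar_lt s T ->
  (forall j, (1 <= j <= S k)%nat -> bcoef k (xi s) j = 0) ->
  forall t, 0 <= t -> Rbar_lt t T -> forall i, (1 <= i <= k)%nat -> xi t i = 0.
Proof.
  intros Hk Hsum Hs HsT Hs0.
  assert (HT0 := Rbar_lt_of_le 0 s T Hs HsT).
  assert (Hb : forall u j, 0 < u -> Rbar_lt u T -> (1 <= j <= S k)%nat -> bcoef k (xi u) j = 0).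
  { intros u j Hu HuT Hj. destruct (Rle_lt_dec u s) as [Hus | Hsu].
    - apply (bcoef_vanish_backward u s); auto.
    - assert (Hfwd : forall r, scaled_max k r (xi u) = 0).
      { intros r. apply Rle_antisym; [| apply scaled_max_nonneg].
        rewrite <- (scaled_max_of_bcoef_zero k r (xi s) Hs0).
        apply scaled_max_nonincreasing; auto; lra. }
      apply bcoef_zero_of_scaled_max_zero; auto. }
  assert (Hconst : forall i u v,
            (1 <= i <= k)%nat -> 0 < v <= u -> Rbar_lt u T -> xi v i = xi u i).
  { intros i u v Hi [Hv [Hvu | <-]] HuT; [| reflexivity].
    apply (eq_is_derive (fun w => xi w i)); [| exact Hvu]. intros w Hw.
    assert (HwT : Rbar_lt w T) by (apply (Rbar_lt_of_le _ u); auto; lra).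
    assert (Hd := proj2 (Hsol i Hi) w ltac:(lra) HwT).
    unfold rhs in Hd. rewrite !Hb in Hd by (auto; lra || lia).
    rewrite Rminus_0_r in Hd. exact Hd. }
  assert (H0 : forall i u, (1 <= i <= k)%nat -> 0 < u -> Rbar_lt u T -> xi 0 i = xi u i).
  { intros i u Hi Hu HuT. apply (right_continuous_eq (fun v => xi v i));
      [apply solution_right_continuous; auto; lra |].
    apply (filter_imp (fun v => 0 < v /\ Rbar_lt v u));
      [intros v Hv; apply Hconst; simpl in Hv; auto; lra |].
    apply filter_and; [apply at_right_gt | apply at_right_Rbar_lt; auto]. }
  assert (Hcrit : forall i, (1 <= i <= k)%nat -> xi 0 i = 0).
  { apply critical_point_zero; auto. intros j Hj.
    apply (right_continuous_eq (fun v => bcoef k (xi v) j));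
      [apply bcoef_right_continuous; auto; lra |].
    apply (filter_imp (fun v => 0 < v /\ Rbar_lt v T));
      [intros v [Hv HvT]; apply Hb; auto; lia |].
    apply filter_and; [apply at_right_gt | apply at_right_Rbar_lt; auto]. }
  intros t [Ht | <-] HtT i Hi; [rewrite <- (H0 i t) |]; auto.
Qed.

Lemma scaled_max_sum_decreasing (s t : R) :
  (1 <= k)%nat -> vsum k (xi 0) = 0 ->
  ~ (forall t, 0 <= t -> Rbar_lt t T -> forall i, (1 <= i <= k)%nat -> xi t i = 0) ->
  0 <= s < t -> Rbar_lt t T ->
  scaled_max k 1 (xi t) + scaled_max k (-1) (xi t)
  < scaled_max k 1 (xi s) + scaled_max k (-1) (xi s).
Proof.
  intros Hk Hsum Hnz Hst HtT.
  assert (Hmono := fun r => scaled_max_nonincreasing r s t ltac:(lra) HtT).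
  assert (Hdecr := fun r => scaled_max_decreasing r s t Hst HtT).
  destruct (Rlt_or_le 0 (scaled_max k 1 (xi s))) as [Hp | Hp].
  { specialize (Hdecr 1 Hp). specialize (Hmono (-1)). lra. }
  destruct (Rlt_or_le 0 (scaled_max k (-1) (xi s))) as [Hm | Hm].
  { specialize (Hdecr (-1) Hm). specialize (Hmono 1). lra. }
  exfalso. apply Hnz.
  apply (solution_zero_of_bcoef_zero s Hk Hsum); [lra | apply (Rbar_lt_of_le _ t); auto; lra |].
  apply bcoef_zero_of_scaled_max_zero; apply Rle_antisym; auto; apply scaled_max_nonneg.
Qed.

End Solution.

Theorem proposition2p1 (k : nat) (hk : (2 <= k)%nat) :
  (* (a) the only critical point on the hyperplane sum xi_i = 0 is 0 *)
  (forall xi : nat -> R,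
     vsum k xi = 0 ->
     (forall i, (1 <= i <= k)%nat -> rhs k xi i = 0) ->
     forall i, (1 <= i <= k)%nat -> xi i = 0)
  /\
  (* (b) monotonicity of B, -b, and strict decrease of B - b *)
  (forall (xi : R -> nat -> R) (Tinf : Rbar),
     is_maximal_solution k xi Tinf ->
     vsum k (xi 0) = 0 ->
     (forall s t, 0 <= s -> s <= t -> Rbar_lt t Tinf ->
        Bmax k (xi t) <= Bmax k (xi s) /\ - bmin k (xi t) <= - bmin k (xi s))
     /\
     (~ (forall t, 0 <= t -> Rbar_lt t Tinf ->
           forall i, (1 <= i <= k)%nat -> xi t i = 0) ->
      forall s t, 0 <= s -> s < t -> Rbar_lt t Tinf ->
        Bmax k (xi t) - bmin k (xi t) < Bmax k (xi s) - bmin k (xi s))).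
Proof.
  split.
  - intros x Hsum Hrhs. apply critical_point_zero; [lia | exact Hsum |].
    intros j Hj. apply bcoef_zero_of_rhs_zero; auto; lia.
  - intros xi T [_ [Hsol _]] Hsum. split.
    + intros s t Hs Hst HtT. rewrite !Bmax_scaled_max, !bmin_scaled_max.
      split; apply (scaled_max_nonincreasing k xi T Hsol); auto.
    + intros Hnz s t Hs Hst HtT. unfold Rminus. rewrite !bmin_scaled_max, !Bmax_scaled_max.
      apply (scaled_max_sum_decreasing k xi T Hsol); auto; lia.
Qed.
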